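(* Let $(L,\vee,\wedge,0,1)$ be a complemented modular lattice with $0\ne1$ and $a,b,c\in L$. Then: (i) if $\{a\}\le_1 b\to c$, then $a\wedge b\le c$; (ii) $a\wedge b\le c$ if and only if $\{a\wedge b\}\le_1 b\to c$.
   Context: For $a\in L$, $a^+:=\{x\in L\mid a\vee x=1,\ a\wedge x=0\}$ (the set of all complements of $a$). For $A,B\subseteq L$: $A\vee B:=\{x\vee y\mid x\in A,y\in B\}$; $A\le_1B$ means that for every $x\in A$ there exists $y\in B$ with $x\le y$. For $a,b\in L$ define the subset $a\to b:=a^+\vee\{a\wedge b\}=\{x\vee(a\wedge b)\mid x\in a^+\}$. *)

From HB Require Import structures.
From mathcomp Require Import all_boot all_order.
Set Implicit Arguments. Unset Strict Implicit. Unset Printing Implicit Defensive.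
Import Order.Theory.
Local Open Scope order_scope.

Definition modular_lattice {d} (L : latticeType d) : Prop :=
  forall x y z : L, x <= z -> x `|` (y `&` z) = (x `|` y) `&` z.

Definition compls {d} {L : tbLatticeType d} (a : L) : L -> Prop :=
  fun x => a `|` x = \top /\ a `&` x = \bot.

Definition complemented {d} (L : tbLatticeType d) : Prop :=
  forall a : L, exists x, compls a x.

Definition set_join {d} {L : latticeType d} (A B : L -> Prop) : L -> Prop :=
  fun z => exists x y, A x /\ B y /\ z = x `|` y.

Definition le1 {d} {L : latticeType d} (A B : L -> Prop) : Prop :=
  forall x, A x -> exists2 y, B y & x <= y.

Definition singleton {T : Type} (a : T) : T -> Prop := fun x => x = a.

Definition arrow {d} {L : tbLatticeType d} (a b : L) : L -> Prop :=
  set_join (compls a) (singleton (a `&` b)).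

From HB Require Import structures.
From mathcomp Require Import all_boot all_order.
Set Implicit Arguments. Unset Strict Implicit. Unset Printing Implicit Defensive.
Import Order.Theory.
Local Open Scope order_scope.

(* If x is a complement of b, modularity gives
   (x \/ (b /\ c)) /\ b = (x /\ b) \/ (b /\ c) = b /\ c,
   so every element of b -> c meets b exactly in b /\ c.  Hence a <= y with
   y in b -> c forces a /\ b <= b /\ c <= c.  Conversely b /\ c lies below
   every element of b -> c, and b -> c is nonempty since b has a complement. *)

Section Arrow.

Variables (d : Order.disp_t) (L : tbLatticeType d).

Lemma le1_singletonl (a : L) (B : L -> Prop) :
  le1 (singleton a) B <-> exists2 y, B y & a <= y.
Proof.
split=> [le_aB | [y By le_ay] x ->]; last by exists y.
exact: le_aB.
Qed.

Lemma arrow_ge (b c y : L) : arrow b c y -> b `&` c <= y.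
Proof. by move=> [x [z [_ [-> ->]]]]; exact: leUr. Qed.

Lemma arrow_exists (b c : L) : complemented L -> exists y, arrow b c y.
Proof.
move=> complL; have [x compl_bx] := complL b.
by exists (x `|` (b `&` c)), x, (b `&` c).
Qed.

Lemma arrow_meet (b c y : L) :
  modular_lattice L -> arrow b c y -> y `&` b = b `&` c.
Proof.
move=> modL [x [z [[_ bx0] [-> ->]]]].
by rewrite joinC -modL ?leIl // (meetC x b) bx0 joinx0.
Qed.

Lemma meet_le_of_le1_arrow (a b c : L) :
  modular_lattice L -> le1 (singleton a) (arrow b c) -> a `&` b <= c.
Proof.
move=> modL /le1_singletonl [y arrow_y le_ay].
have le_ab_bc : a `&` b <= b `&` c.
  by rewrite -(arrow_meet modL arrow_y) leI2.
exact: le_trans le_ab_bc (leIr _ _).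
Qed.

Lemma le1_arrow_of_le (a b c : L) :
  complemented L -> a <= b `&` c -> le1 (singleton a) (arrow b c).
Proof.
move=> complL le_a_bc; have [y arrow_y] := arrow_exists b c complL.
apply/le1_singletonl; exists y => //.
exact: le_trans le_a_bc (arrow_ge arrow_y).
Qed.

End Arrow.

Theorem theorem2 (d : Order.disp_t) (L : tbLatticeType d)
  (Hmod : modular_lattice L) (Hcompl : complemented L)
  (H01 : (\bot : L) != \top) (a b c : L) :
  (le1 (singleton a) (arrow b c) -> a `&` b <= c) /\
  (a `&` b <= c <-> le1 (singleton (a `&` b)) (arrow b c)).
Proof.
split; first exact: meet_le_of_le1_arrow.
split=> [le_ab_c | le1_ab].
- by apply: (le1_arrow_of_le Hcompl); rewrite lexI leIr le_ab_c.
- by rewrite -(meetxx b) meetA; exact: meet_le_of_le1_arrow le1_ab.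
Qed.
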